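(* Let $\mathcal{C}\subset\mathbb{R}^n$ be nonempty compact convex and let $f$ be continuously differentiable with $\nabla f$ $L$-Lipschitz on $\mathcal{C}$. Let $\{x^t\}_{t\ge0}$ be generated by the Boosted Frank–Wolfe algorithm described in the context with $m^t=\nabla f(x^t)$ for every $t$. Then for all $t\ge0$, $$f(x^{t+1})\le f(x^t)+\eta_t\langle\nabla f(x^t),s^t-x^t\rangle+\frac L2\eta_t^2\|s^t-x^t\|^2,$$ where $s^t=\mathrm{lmo}(\nabla f(x^t))$.
   Context: Euclidean norms. $\mathrm{lmo}(v)$ denotes a (fixed selection of a) point of $\arg\min_{s\in\mathcal{C}}\langle s,v\rangle$. $\mathrm{align}(d,\hat d)=\frac{\langle d,\hat d\rangle}{\|d\|\|\hat d\|}$ if $\hat d\ne0$, $-1$ if $\hat d=0$. Algorithm: inputs $K\ge1$, $\delta\in(0,1]$, step decays $\eta_t>0$, a vector $m^{\rm init}$; $x^0=\mathrm{lmo}(m^{\rm init})$. At iteration $t$ a vector $m^t$ is formed. Boosting: $\psi^0=0$, $\Lambda_t=0$, $k=0$; while $k\le K-1$: $r^k=-m^t-\psi^k$, $v^k=\mathrm{lmo}(-r^k)$; if $k=0$, $s^t=v^0$; if $\psi^k\ne0$, $u^k$ is whichever of $v^k-x^t$, $-\psi^k/\|\psi^k\|$ has the larger inner product with $r^k$, else $u^k=v^k-x^t$; if $u^k=0$ stop; $\lambda_k=\langle r^k,u^k\rangle/\|u^k\|^2$, $\phi^k=\psi^k+\lambda_ku^k$; if $\mathrm{align}(-m^t,\phi^k)-\mathrm{align}(-m^t,\psi^k)\ge\delta$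 then $\psi^{k+1}=\phi^k$, $\Lambda_t\leftarrow\Lambda_t+\lambda_k$ if $u^k=v^k-x^t$ and $\Lambda_t\leftarrow\Lambda_t(1-\lambda_k/\|\psi^k\|)$ otherwise, $k\leftarrow k+1$; else stop. With $\psi$ the last accepted candidate, $\tilde d^t=\psi/\Lambda_t$ if $\Lambda_t\ne0$, else $0$. $\gamma_t=\min\{\eta_t\|s^t-x^t\|/\|\tilde d^t\|,1\}$ if $\tilde d^t\ne0$, else $1$. If $\gamma_t<1$: $x^{t+1}=x^t+\gamma_t\tilde d^t$; otherwise $x^{t+1}=x^t+\eta_t(s^t-x^t)$. *)

From HB Require Import structures.
From mathcomp Require Import all_boot all_order all_algebra.
From mathcomp Require Import all_classical all_reals all_analysis.
Set Implicit Arguments. Unset Strict Implicit. Unset Printing Implicit Defensive.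
Import Order.TTheory GRing.Theory Num.Theory.
Import numFieldNormedType.Exports.
Local Open Scope classical_set_scope.
Local Open Scope ring_scope.

Section BFW.
Variables (R : realType) (n : nat).
Implicit Types (u v x m : 'rV[R]_n).

Definition dot u v : R := \sum_(i < n) u 0 i * v 0 i.
Definition enorm u : R := Num.sqrt (dot u u).

Definition align u v : R :=
  if v != 0 then dot u v / (enorm u * enorm v) else -1.

Definition convex_rV (C : set 'rV[R]_n) : Prop :=
  forall x y, C x -> C y -> forall a : R, 0 <= a <= 1 ->
    C (a *: x + (1 - a) *: y).

Definition is_lmo (C : set 'rV[R]_n) (lmo : 'rV[R]_n -> 'rV[R]_n) : Prop :=
  forall v, C (lmo v) /\ forall s, C s -> dot (lmo v) v <= dot s v.

(* The boosting loop (while k <= K-1), run with at most [j] remaining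
   iterations, current accepted candidate [psi] and current [Lam].
   Returns the last accepted candidate psi and Lambda_t. *)
Fixpoint boost_loop (lmo : 'rV[R]_n -> 'rV[R]_n) (delta : R) (x m : 'rV[R]_n)
  (j : nat) (psi : 'rV[R]_n) (Lam : R) : 'rV[R]_n * R :=
  match j with
  | 0 => (psi, Lam)
  | j'.+1 =>
    let r := - m - psi in
    let v := lmo (- r) in
    let ufw := v - x in
    let uaw := - ((enorm psi)^-1 *: psi) in
    (* fw = true iff u^k = v^k - x^t  (ties broken in favour of v^k - x^t) *)
    let fw := if psi != 0 then dot r uaw <= dot r ufw else true in
    let u := if fw then ufw else uaw in
    if u == 0 then (psi, Lam) else
    let lam := dot r u / (enorm u ^+ 2) in
    let phi := psi + lam *: u in
    if delta <= align (- m) phi - align (- m) psi then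
      boost_loop lmo delta x m j' phi
        (if fw then Lam + lam else Lam * (1 - lam / enorm psi))
    else (psi, Lam)
  end.

Definition bfw_step (lmo : 'rV[R]_n -> 'rV[R]_n) (K : nat) (delta eta : R)
  (x m : 'rV[R]_n) : 'rV[R]_n :=
  let s := lmo (- (- m - 0)) in                      (* s^t = v^0 *)
  let pL := boost_loop lmo delta x m K 0 0 in
  let psi := pL.1 in
  let Lam := pL.2 in
  let dt := if Lam != 0 then Lam^-1 *: psi else 0 in
  let gamma := if dt != 0 then Num.min (eta * enorm (s - x) / enorm dt) 1
               else 1 in
  if gamma < 1 then x + gamma *: dt else x + eta *: (s - x).

Fixpoint bfw_iter (lmo : 'rV[R]_n -> 'rV[R]_n) (K : nat) (delta : R)
  (eta : nat -> R) (grad : 'rV[R]_n -> 'rV[R]_n) (minit : 'rV[R]_n)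
  (t : nat) : 'rV[R]_n :=
  match t with
  | 0 => lmo minit
  | t'.+1 => let x := bfw_iter lmo K delta eta grad minit t' in
             bfw_step lmo K delta (eta t') x (grad x)
  end.

End BFW.

From HB Require Import structures.
From mathcomp Require Import all_boot all_order all_algebra.
From mathcomp Require Import all_classical all_reals all_analysis.
From mathcomp Require Import lra ring.
Import Order.TTheory GRing.Theory Num.Theory.
Import numFieldNormedType.Exports.
Local Open Scope classical_set_scope.
Local Open Scope ring_scope.

Set Implicit Arguments.
Unset Strict Implicit.
Unset Printing Implicit Defensive.

(* Every Boosted Frank-Wolfe step is either the Frank-Wolfe step
   [x + eta (s - x)] or a step [x + a (p - x)] of the same length [eta |s - x|]
   towards a point [p] of [C] such that [p - x] is at least as well aligned
   with [- grad f x] as [s - x]. Indeed, along the boosting loop the accepted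
   candidate stays a nonnegative multiple of [p - x] for a convex combination
   [p] of points returned by the lmo (an away correction merely rescales it,
   by a positive factor since it has to increase the alignment), and its
   alignment only increases. Better alignment makes the linear term
   [a <grad f x, p - x>] at most [eta <grad f x, s - x>] while the quadratic
   term is the same, so the descent lemma for L-smooth [f] gives the bound in
   both cases. *)

Section InnerProduct.
Context {R : realType} {n : nat}.
Implicit Types (u v w : 'rV[R]_n).

Lemma dotC u v : dot u v = dot v u.
Proof. by apply: eq_bigr => i _; rewrite mulrC. Qed.

Lemma dotDl u w v : dot (u + w) v = dot u v + dot w v.
Proof. by rewrite /dot -big_split; apply: eq_bigr => i _; rewrite mxE mulrDl. Qed.

Lemma dotZl a u v : dot (a *: u) v = a * dot u v.
Proof. by rewrite /dot mulr_sumr; apply: eq_bigr => i _; rewrite mxE mulrA. Qed.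

Lemma dotNl u v : dot (- u) v = - dot u v.
Proof. by rewrite -scaleN1r dotZl mulN1r. Qed.

Lemma dotBl u w v : dot (u - w) v = dot u v - dot w v.
Proof. by rewrite dotDl dotNl. Qed.

Lemma dotZr a u v : dot v (a *: u) = a * dot v u.
Proof. by rewrite dotC dotZl dotC. Qed.

Lemma dotNr u v : dot v (- u) = - dot v u.
Proof. by rewrite dotC dotNl dotC. Qed.

Lemma dotBr u w v : dot v (u - w) = dot v u - dot v w.
Proof. by rewrite dotC dotBl !(dotC v). Qed.

Lemma dot0l v : dot 0 v = 0.
Proof. by rewrite -(scale0r 0) dotZl mul0r. Qed.

Lemma dot0r v : dot v 0 = 0.
Proof. by rewrite dotC dot0l. Qed.

Lemma dotvv_ge0 u : 0 <= dot u u.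
Proof. by apply: sumr_ge0 => i _; rewrite -expr2 sqr_ge0. Qed.

Lemma dotvv_eq0 u : (dot u u == 0) = (u == 0).
Proof.
apply/idP/eqP => [|->]; last by rewrite dot0l.
rewrite psumr_eq0 => [/allP u0|i _]; last by rewrite -expr2 sqr_ge0.
apply/rowP => i; rewrite mxE.
by have /u0 := mem_index_enum i; rewrite /= mulf_eq0 orbb => /eqP.
Qed.

Lemma enorm_ge0 u : 0 <= enorm u.
Proof. exact: sqrtr_ge0. Qed.

Lemma enorm_sqr u : enorm u ^+ 2 = dot u u.
Proof. by rewrite sqr_sqrtr // dotvv_ge0. Qed.

Lemma enorm0 : enorm (0 : 'rV[R]_n) = 0.
Proof. by rewrite /enorm dot0l sqrtr0. Qed.

Lemma enorm_gt0 u : (0 < enorm u) = (u != 0).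
Proof. by rewrite sqrtr_gt0 lt_def dotvv_ge0 dotvv_eq0 andbT. Qed.

Lemma enormZ a u : enorm (a *: u) = `|a| * enorm u.
Proof. by rewrite /enorm dotZl dotZr mulrA -expr2 sqrtrM ?sqr_ge0 // sqrtr_sqr. Qed.

Lemma enormN u : enorm (- u) = enorm u.
Proof. by rewrite -scaleN1r enormZ normrN normr1 mul1r. Qed.

Lemma dot_le_enorm u v : dot u v <= enorm u * enorm v.
Proof.
have [->|u0] := eqVneq u 0; first by rewrite dot0l enorm0 mul0r.
have [->|v0] := eqVneq v 0; first by rewrite dot0r enorm0 mulr0.
set a := enorm u; set b := enorm v.
have a0 : 0 < a by rewrite enorm_gt0.
have b0 : 0 < b by rewrite enorm_gt0.
have := dotvv_ge0 (b *: u - a *: v).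
rewrite !(dotBl, dotBr, dotZl, dotZr) -!enorm_sqr -/a -/b (dotC v u) => sqr_ge0_expanded.
have : a * b * dot u v <= a * b * (a * b) by nra.
by rewrite ler_pM2l ?mulr_gt0.
Qed.

End InnerProduct.

Section Alignment.
Context {R : realType} {n : nat}.
Implicit Types (u v w : 'rV[R]_n).

Lemma align0 u : align u 0 = -1.
Proof. by rewrite /align eqxx. Qed.

Lemma alignN1_le u v : -1 <= align u v.
Proof.
rewrite /align; case: ifPn => [v0|_]; last by [].
have [->|u0] := eqVneq u 0; first by rewrite dot0l mul0r lerN10.
have uv0 : 0 < enorm u * enorm v by rewrite mulr_gt0 ?enorm_gt0.
rewrite ler_pdivlMr // mulN1r lerNl -dotNl -(enormN u).
exact: dot_le_enorm.
Qed.

Lemma align_ge0 u v : v != 0 -> 0 <= dot u v -> 0 <= align u v.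
Proof. by move=> v0 uv; rewrite /align v0 divr_ge0 // mulr_ge0 // enorm_ge0. Qed.

Lemma alignZ c u v : 0 < c -> align u (c *: v) = align u v.
Proof.
move=> c0; have [->|v0] := eqVneq v 0; first by rewrite scaler0.
rewrite /align scaler_eq0 (gt_eqF c0) v0 dotZr enormZ gtr0_norm //.
have [->|u0] := eqVneq u 0; first by rewrite dot0l !mulr0 !mul0r.
have [nu nv] : 0 < enorm u /\ 0 < enorm v by rewrite !enorm_gt0.
by field; rewrite !gt_eqF.
Qed.

Lemma alignZ_lt0 c u v : c < 0 -> v != 0 -> align u (c *: v) = - align u v.
Proof.
move=> c0 v0; rewrite /align scaler_eq0 (lt_eqF c0) v0 dotZr enormZ ltr0_norm //.
have [->|u0] := eqVneq u 0; first by rewrite dot0l !mulr0 !mul0r oppr0.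
have [nu nv] : 0 < enorm u /\ 0 < enorm v by rewrite !enorm_gt0.
by field; rewrite (lt_eqF c0) !gt_eqF.
Qed.

Lemma align_le_dot u v w :
  align u v <= align u w -> enorm w * dot u v <= enorm v * dot u w.
Proof.
have [->|v0] := eqVneq v 0; first by rewrite dot0r enorm0 mulr0 mul0r.
have [->|w0] := eqVneq w 0; first by rewrite dot0r enorm0 mulr0 mul0r.
have [->|u0] := eqVneq u 0; first by rewrite !dot0l !mulr0.
rewrite /align v0 w0 /=.
have [nu nv nw] : [/\ 0 < enorm u, 0 < enorm v & 0 < enorm w].
  by rewrite !enorm_gt0.
rewrite ler_pdivrMr ?mulr_gt0 // mulrAC ler_pdivlMr ?mulr_gt0 // => h.
by rewrite -(ler_pM2l nu); nra.
Qed.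

End Alignment.

Lemma is_derive_line {R : numFieldType} {V W : normedModType R} (f : V -> W)
    (x d : V) (t : R) :
  differentiable f (x + t *: d) ->
  is_derive t 1 (fun s : R => f (x + s *: d)) ('d f (x + t *: d) d).
Proof.
move=> df.
have E : (fun h : R => h^-1 *: (f (x + (h *: 1 + t) *: d) - f (x + t *: d)))
       = (fun h : R => h^-1 *: (f (h *: d + (x + t *: d)) - f (x + t *: d))).
  by apply: funext => h; rewrite [_ *: 1]mulr1 scalerDl addrCA addrC.
apply: DeriveDef; first by rewrite /derivable /= E; exact: diff_derivable.
by rewrite /derive /= E -deriveE.
Qed.

Lemma convex_rV_seg {R : realType} {n : nat} (C : set 'rV[R]_n) x p a :
  convex_rV C -> C x -> C p -> 0 <= a <= 1 -> C (x + a *: (p - x)).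
Proof.
move=> cvx Cx Cp a01.
have -> : x + a *: (p - x) = a *: p + (1 - a) *: x.
  by rewrite scalerBr scalerBl scale1r addrCA addrC.
exact: cvx.
Qed.

Section DescentLemma.
Context {R : realType} {n : nat}.
Variables (C : set 'rV[R]_n) (f : 'rV[R]_n -> R) (grad : 'rV[R]_n -> 'rV[R]_n) (L : R).
Hypotheses (cvx : convex_rV C) (df : forall x, differentiable f x)
  (dfE : forall x v, 'd f x v = dot (grad x) v)
  (lip : forall x y, C x -> C y -> enorm (grad x - grad y) <= L * enorm (x - y)).

Lemma descent_lemma x y : C x -> C y ->
  f y <= f x + dot (grad x) (y - x) + L / 2 * enorm (y - x) ^+ 2.
Proof.
move=> Cx Cy; set d := y - x; set c := dot (grad x) d.
set k := L / 2 * enorm d ^+ 2.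
pose h := (fun s : R => f (x + s *: d)) - (fun s : R => c * s + k * (s * s)).
have h' (t : R) : is_derive t 1 h (dot (grad (x + t *: d)) d - (c + k * (t + t))).
  rewrite -dfE; apply: is_deriveB; first exact: is_derive_line.
  have -> : (fun s : R => c * s + k * (s * s)) = c \*: id + k \*: (id * id).
    by apply: funext.
  by apply: is_derive_eq; rewrite ![_%:A]mulr1.
have hc : continuous h.
  by move=> t; apply/differentiable_continuous/derivable1_diffP; case: (h' t).
have [t0 /[!in_itv] /= /andP[t0_ge0 t0_le1] h10] :=
  MVT_segment ler01 (fun t _ => h' t) (continuous_subspaceT hc).
set z := x + t0 *: d.
have Cz : C z by apply: convex_rV_seg => //; rewrite t0_ge0.
have slope : dot (grad z - grad x) d <= k * (t0 + t0).
  apply: le_trans (dot_le_enorm _ _) _.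
  have : enorm (grad z - grad x) <= L * (t0 * enorm d).
    have -> : t0 * enorm d = enorm (z - x) by rewrite addrAC subrr add0r enormZ ger0_norm.
    exact: lip.
  by rewrite /k; move: (enorm_ge0 d); nra.
have xdy : x + d = y by rewrite addrC subrK.
move: h10 slope; rewrite /h !fctE /= scale1r xdy scale0r addr0 dotBl -/z -/c; lra.
Qed.

End DescentLemma.

Section BoostLoop.
Context {R : realType} {n : nat}.
Variables (C : set 'rV[R]_n) (lmo : 'rV[R]_n -> 'rV[R]_n) (delta : R) (x m : 'rV[R]_n).
Hypotheses (cvx : convex_rV C) (hlmo : is_lmo C lmo) (Cx : C x) (delta_gt0 : 0 < delta).

Lemma dot_lmo_ge0 r : 0 <= dot r (lmo (- r) - x).
Proof.
have [_ /(_ x Cx)] := hlmo (- r).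
by rewrite !dotNr dotBr lerN2 (dotC x) (dotC (lmo _)) subr_ge0.
Qed.

(* The last clause excludes that an away step flips the sign of [psi]. *)
Definition boost_inv (psi : 'rV[R]_n) (Lam : R) : Prop :=
  [/\ 0 <= Lam, exists2 p, C p & psi = Lam *: (p - x)
    & psi != 0 -> align (- m) (lmo m - x) <= align (- m) psi /\ 0 <= align (- m) psi].

Lemma boost_inv0 : boost_inv 0 0.
Proof. by split=> //; [exists x; rewrite ?scale0r | rewrite eqxx]. Qed.

Lemma boost_inv_fw psi Lam v lam : boost_inv psi Lam -> C v -> 0 <= lam ->
  (psi = 0 -> v = lmo m) -> align (- m) psi < align (- m) (psi + lam *: (v - x)) ->
  boost_inv (psi + lam *: (v - x)) (Lam + lam).
Proof.
move=> [Lam_ge0 [p Cp Epsi] al] Cv lam_ge0 psi0v.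
set phi := psi + _ => gt.
have phi0 : phi != 0.
  by apply: contraTneq gt => ->; rewrite align0 -leNgt alignN1_le.
have Llam : 0 < Lam + lam.
  rewrite lt_def addr_ge0 // andbT; apply: contra phi0.
  rewrite paddr_eq0 // => /andP[/eqP L0 /eqP l0].
  by rewrite /phi Epsi L0 l0 !scale0r addr0.
split; first exact: ltW.
- set a := Lam / (Lam + lam).
  exists (a *: p + (1 - a) *: v).
    by apply: cvx => //; rewrite divr_ge0 ?ler_pdivrMr ?mul1r ?lerDl // ltW.
  apply/rowP => i; rewrite /phi Epsi /a !mxE; field; exact: lt0r_neq0.
move=> _; have [psi0|psi_neq0] := eqVneq psi 0; last first.
  by have [] := al psi_neq0; lra.
move: phi0 gt; rewrite /phi psi0 (psi0v psi0) add0r.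
have [->|lam_gt0] := eqVneq lam 0; first by rewrite scale0r eqxx.
rewrite alignZ ?lt_def ?lam_gt0 // scaler_eq0 (negPf lam_gt0) /= => s0 _.
split => //; apply: align_ge0 => //.
by have := dot_lmo_ge0 (- m); rewrite opprK.
Qed.

Lemma boost_inv_away psi Lam c : boost_inv psi Lam -> psi != 0 ->
  align (- m) psi < align (- m) (c *: psi) -> boost_inv (c *: psi) (Lam * c).
Proof.
move=> [Lam_ge0 [p Cp Epsi] al] psi0 gt; have [al_s al_ge0] := al psi0.
have c_gt0 : 0 < c.
  have [c_lt0|//|c0] := ltgtP c 0; move: gt.
    by rewrite alignZ_lt0 //; lra.
  by rewrite c0 scale0r align0; move: (alignN1_le (- m) psi); lra.
split; first by rewrite mulr_ge0 // ltW.
- by exists p => //; rewrite Epsi scalerA mulrC.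
by rewrite alignZ.
Qed.

Lemma boost_loop_inv j psi Lam : boost_inv psi Lam ->
  boost_inv (boost_loop lmo delta x m j psi Lam).1 (boost_loop lmo delta x m j psi Lam).2.
Proof.
elim: j psi Lam => [//|j IH] psi Lam inv /=.
set r := - m - psi; set v := lmo (- r); set fw := if psi != 0 then _ else true.
have accept_gt phi : delta <= align (- m) phi - align (- m) psi ->
    align (- m) psi < align (- m) phi.
  by move=> acc; rewrite -subr_gt0 (lt_le_trans delta_gt0 acc).
case Efw : fw.
  case: ifP => [_|_]; first exact: inv.
  case: ifP => [/accept_gt acc|_]; last exact: inv.
  apply/IH/boost_inv_fw => //; first by case: (hlmo (- r)).
    by rewrite divr_ge0 ?dot_lmo_ge0 ?sqr_ge0.
  by move=> psi0; rewrite /v /r psi0 subr0 opprK.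
have psi0 : psi != 0 by move: Efw; rewrite /fw; case: (psi != 0).
case: ifP => [_|_]; first exact: inv.
set lam := _ / _.
have -> : psi + lam *: - ((enorm psi)^-1 *: psi) = (1 - lam / enorm psi) *: psi.
  by rewrite scalerN scalerA scalerBl scale1r.
case: ifP => [/accept_gt acc|_]; last exact: inv.
exact/IH/boost_inv_away.
Qed.

End BoostLoop.

Section BFWStep.
Context {R : realType} {n : nat}.
Variables (C : set 'rV[R]_n) (lmo : 'rV[R]_n -> 'rV[R]_n) (K : nat) (delta eta : R).
Hypotheses (cvx : convex_rV C) (hlmo : is_lmo C lmo) (delta_gt0 : 0 < delta)
  (eta01 : 0 <= eta <= 1).

Lemma bfw_stepP x m : C x -> let s := lmo m in
  exists p a, [/\ C p, 0 <= a <= 1, bfw_step lmo K delta eta x m = x + a *: (p - x),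
    a * enorm (p - x) = eta * enorm (s - x) & a * dot m (p - x) <= eta * dot m (s - x)].
Proof.
move=> Cx s; have [eta_ge0 _] := andP eta01.
have fw_step : exists p a, [/\ C p, 0 <= a <= 1, x + eta *: (s - x) = x + a *: (p - x),
    a * enorm (p - x) = eta * enorm (s - x) & a * dot m (p - x) <= eta * dot m (s - x)].
  by exists s, eta; split; first by case: (hlmo m).
rewrite /bfw_step subr0 opprK -/s.
have := boost_loop_inv cvx hlmo Cx delta_gt0 K (boost_inv0 lmo m Cx).
case: boost_loop => psi Lam [/= Lam_ge0 [p Cp Epsi] al].
have [->|Lam0] := eqVneq Lam 0; first by rewrite eqxx /= ltxx.
have Lam_gt0 : 0 < Lam by rewrite lt_def Lam0.
rewrite /= Epsi scalerA mulVf // scale1r.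
have [->|px0] := eqVneq (p - x) 0; first by rewrite /= ltxx.
rewrite /=; set a := eta * enorm (s - x) / enorm (p - x).
have px_gt0 : 0 < enorm (p - x) by rewrite enorm_gt0.
have a_ge0 : 0 <= a by rewrite !mulr_ge0 ?invr_ge0 ?enorm_ge0.
case: ifPn => [|_]; last exact: fw_step.
rewrite gt_min ltxx orbF => a_lt1; rewrite min_l ?ltW //.
exists p, a; split => //; first by rewrite a_ge0 ltW.
  by rewrite /a mulfVK // gt_eqF.
have [|al_s _] := al; first by rewrite Epsi scaler_eq0 negb_or Lam0.
move: al_s; rewrite Epsi alignZ // => /align_le_dot.
rewrite !dotNl !mulrN lerN2 => le_sp.
by rewrite /a mulrAC ler_pdivrMr // -!mulrA ler_wpM2l // [X in _ <= X]mulrC.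
Qed.

Lemma bfw_step_in x m : C x -> C (bfw_step lmo K delta eta x m).
Proof.
move=> Cx; have [p [a [Cp a01 -> _ _]]] := bfw_stepP m Cx.
exact: convex_rV_seg.
Qed.

Lemma bfw_step_le (f : 'rV[R]_n -> R) (grad : 'rV[R]_n -> 'rV[R]_n) (L : R) x :
  (forall z, differentiable f z) -> (forall z v, 'd f z v = dot (grad z) v) ->
  (forall y z, C y -> C z -> enorm (grad y - grad z) <= L * enorm (y - z)) ->
  C x -> f (bfw_step lmo K delta eta x (grad x)) <=
    f x + eta * dot (grad x) (lmo (grad x) - x)
    + L / 2 * eta ^+ 2 * enorm (lmo (grad x) - x) ^+ 2.
Proof.
move=> df dfE lip Cx.
have [p [a [Cp a01 -> len lin]]] := bfw_stepP (grad x) Cx.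
have := descent_lemma cvx df dfE lip Cx (convex_rV_seg cvx Cx Cp a01).
have [a_ge0 _] := andP a01.
rewrite [x + _ - x]addrC addKr dotZr enormZ ger0_norm // len exprMn mulrA; lra.
Qed.

End BFWStep.

Theorem lemma2 (R : realType) (n : nat) (C : set 'rV[R]_n)
  (f : 'rV[R]_n -> R) (grad : 'rV[R]_n -> 'rV[R]_n) (L : R)
  (lmo : 'rV[R]_n -> 'rV[R]_n) (K : nat) (delta : R) (eta : nat -> R)
  (minit : 'rV[R]_n) :
  C !=set0 -> compact C -> convex_rV C ->
  (forall x, differentiable f x) ->
  (forall x v, 'd f x v = dot (grad x) v) ->
  continuous grad ->
  (forall x y, C x -> C y -> enorm (grad x - grad y) <= L * enorm (x - y)) ->
  is_lmo C lmo ->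
  (1 <= K)%N -> 0 < delta <= 1 ->
  (forall t, 0 < eta t <= 1) ->
  forall t : nat,
    let x := bfw_iter lmo K delta eta grad minit in
    let s := lmo (grad (x t)) in
    f (x t.+1) <= f (x t) + eta t * dot (grad (x t)) (s - x t)
                  + L / 2 * eta t ^+ 2 * enorm (s - x t) ^+ 2.
Proof.
move=> _ _ cvx df dfE _ lip hlmo _ /andP[delta_gt0 _] eta_gt0_le1 t; cbv zeta.
set x := bfw_iter lmo K delta eta grad minit.
have eta01 k : 0 <= eta k <= 1 by have /andP[/ltW -> ->] := eta_gt0_le1 k.
have Cx k : C (x k).
  elim: k => [|k IH]; first by case: (hlmo minit).
  exact: bfw_step_in.
exact: (bfw_step_le K cvx hlmo delta_gt0 (eta01 t) df dfE lip (Cx t)).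
Qed.
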